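(* Algorithm 1 picks at most $(\alpha+\varepsilon)\cdot\widetilde{\mathrm{opt}}$ sets in $\mathrm{SOL}$.
   Context: Algorithm 1. Input: a stream of sets $S_1,\dots,S_m\subseteq[n]$, an integer $\alpha\ge1$, a parameter $\varepsilon>0$, and a number $\widetilde{\mathrm{opt}}$ with $\mathrm{opt}\le\widetilde{\mathrm{opt}}\le(1+\varepsilon)\mathrm{opt}$, where $\mathrm{opt}$ is the minimum number of input sets covering $[n]$. (1) Set $U\leftarrow[n]$, $\mathrm{SOL}\leftarrow\emptyset$. (2) In one pass, for each $S_i$ with $|S_i\cap U|\ge n/(\varepsilon\,\widetilde{\mathrm{opt}})$: add $i$ to $\mathrm{SOL}$ and set $U\leftarrow U\setminus S_i$. (3) For $j=1,\dots,\alpha$: (a) let $U_{\mathrm{smpl}}\subseteq U$ contain each element of $U$ independently with probability $p=16\,\widetilde{\mathrm{opt}}\log m/n^{1-1/\alpha}$; (b) in one pass, store $S'_i=S_i\cap U_{\mathrm{smpl}}$ for all $i\in[m]$; (c) compute an optimal (minimum-size) set cover $\mathrm{OPT}'$ of the instance $(S'_1,\dots,S'_m)$ on universe $U_{\mathrm{smpl}}$ and add its indices to $\mathrm{SOL}$; (d) in another pass, set $U\leftarrow U\setminus\bigcup_{i\in\mathrm{OPT}'}S_i$. (4) Return $\mathrm{SOL}$. *)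

From mathcomp Require Import all_boot all_order all_algebra.
Set Implicit Arguments. Unset Strict Implicit. Unset Printing Implicit Defensive.
Import Order.TTheory GRing.Theory Num.Theory.
Local Open Scope ring_scope.

Definition is_cover (n m : nat) (S : 'I_m -> {set 'I_n}) (U : {set 'I_n})
  (C : {set 'I_m}) : Prop :=
  U \subset \bigcup_(i in C) S i.

Definition is_min_cover (n m : nat) (S : 'I_m -> {set 'I_n}) (U : {set 'I_n})
  (C : {set 'I_m}) : Prop :=
  is_cover S U C /\ forall C', is_cover S U C' -> (#|C| <= #|C'|)%N.

Definition optimal_value (n m : nat) (S : 'I_m -> {set 'I_n}) (U : {set 'I_n})
  (opt : nat) : Prop :=
  exists C, is_min_cover S U C /\ #|C| = opt.

(* Step (2): one streaming pass over S_1..S_m with threshold thr, starting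
   from U = [n], SOL = empty.  State = (U, SOL). *)
Definition step2 (R : realFieldType) (n m : nat) (S : 'I_m -> {set 'I_n})
  (thr : R) : {set 'I_n} * {set 'I_m} :=
  foldl (fun st i =>
           if thr <= (#|S i :&: st.1|)%:R then (st.1 :\: S i, i |: st.2)
           else st)
        ([set: 'I_n], set0) (enum 'I_m).

(* One iteration j of step (3): U_smpl is the (random) sample, an arbitrary
   subset of U; OPT' is an optimal set cover of the instance
   (S_i :&: U_smpl)_i on universe U_smpl. *)
Definition step3_iter (n m : nat) (S : 'I_m -> {set 'I_n})
  (st st' : {set 'I_n} * {set 'I_m}) : Prop :=
  exists (Usmpl : {set 'I_n}) (OPT' : {set 'I_m}),
    [/\ Usmpl \subset st.1,
        is_min_cover (fun i => S i :&: Usmpl) Usmpl OPT',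
        st'.2 = st.2 :|: OPT' &
        st'.1 = st.1 :\: \bigcup_(i in OPT') S i].

Fixpoint step3_run (n m : nat) (S : 'I_m -> {set 'I_n}) (k : nat)
  (st st' : {set 'I_n} * {set 'I_m}) : Prop :=
  match k with
  | O => st' = st
  | k'.+1 => exists mid, step3_run S k' st mid /\ step3_iter S mid st'
  end.

(* SOL is a possible output of Algorithm 1 (over all outcomes of the
   random samples and all choices of optimal covers). *)
Definition alg1_output (R : realFieldType) (n m : nat) (S : 'I_m -> {set 'I_n})
  (alpha : nat) (eps optt : R) (SOL : {set 'I_m}) : Prop :=
  exists Ufin, step3_run S alpha (step2 S (n%:R / (eps * optt))) (Ufin, SOL).

(** Every set taken in the streaming pass removes at least [n / (eps * optt)]
    uncovered elements, so [#|SOL| * n / (eps * optt) + #|U|] never exceeds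
    [n] and that pass takes at most [eps * optt] sets. In each of the [alpha]
    sampling rounds an optimal cover of the whole universe, restricted to the
    sample, covers the sample, so the optimal sample cover has at most
    [opt <= optt] sets. *)
From mathcomp Require Import all_boot all_order all_algebra.
From mathcomp Require Import lra.
Set Implicit Arguments. Unset Strict Implicit. Unset Printing Implicit Defensive.
Import Order.TTheory GRing.Theory Num.Theory.
Local Open Scope ring_scope.

Section StreamingPass.

Variables (R : realFieldType) (n m : nat) (S : 'I_m -> {set 'I_n}).

Definition greedy_step (thr : R) (st : {set 'I_n} * {set 'I_m}) (i : 'I_m) :=
  if thr <= (#|S i :&: st.1|)%:R then (st.1 :\: S i, i |: st.2) else st.

Definition greedy_potential (thr : R) (st : {set 'I_n} * {set 'I_m}) : R :=
  #|st.2|%:R * thr + #|st.1|%:R.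

Lemma greedy_potential_step thr st i : 0 <= thr ->
  greedy_potential thr (greedy_step thr st i) <= greedy_potential thr st.
Proof.
rewrite /greedy_step /greedy_potential => thr_ge0.
case: ifP => // large_i /=.
have cardU := cardsID (S i) st.1.
have card_sol : (#|i |: st.2| <= #|st.2|.+1)%N.
  by rewrite cardsU1; case: (i \in st.2).
have {}card_sol : #|i |: st.2|%:R <= #|st.2|%:R + 1 :> R.
  by rewrite natr1 ler_nat.
rewrite -cardU natrD setIC in large_i *.
nra.
Qed.

Lemma greedy_potential_foldl thr st s : 0 <= thr ->
  greedy_potential thr (foldl (greedy_step thr) st s)
  <= greedy_potential thr st.
Proof.
move=> thr_ge0; elim: s st => [|i s IHs] st //=.
by apply: le_trans (IHs _) _; apply: greedy_potential_step.
Qed.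

Lemma card_step2_le (t : R) : (0 < n)%N -> 0 < t ->
  #|(step2 S (n%:R / t)).2|%:R <= t.
Proof.
move=> n_gt0 t_gt0.
have n_pos : (0 : R) < n%:R by rewrite ltr0n.
have thr_ge0 : (0 : R) <= n%:R / t by rewrite divr_ge0 // ltW.
have := greedy_potential_foldl ([set: 'I_n], set0) (enum 'I_m) thr_ge0.
rewrite /greedy_potential /= cards0 cardsT card_ord mul0r add0r => pot.
have : #|(step2 S (n%:R / t)).2|%:R * (n%:R / t) <= n%:R :> R.
  by apply: le_trans pot; rewrite lerDl.
by rewrite mulrA ler_pdivrMr // mulrC ler_pM2l.
Qed.

End StreamingPass.

Section SamplingRounds.

Variables (n m : nat) (S : 'I_m -> {set 'I_n}).

Lemma is_cover_restrict (U V : {set 'I_n}) (C : {set 'I_m}) :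
  is_cover S U C -> V \subset U -> is_cover (fun i => S i :&: V) V C.
Proof.
move=> covC subVU; apply/subsetP => x xV.
have /bigcupP [i iC xSi] := subsetP covC x (subsetP subVU x xV).
by apply/bigcupP; exists i => //; rewrite inE xSi.
Qed.

Lemma cover_card_gt0 (U : {set 'I_n}) (C : {set 'I_m}) :
  U != set0 -> is_cover S U C -> (0 < #|C|)%N.
Proof.
case/set0Pn => x xU covC.
have /bigcupP [i iC _] := subsetP covC x xU.
by rewrite card_gt0; apply/set0Pn; exists i.
Qed.

Lemma card_step3_iter (C : {set 'I_m}) st st' :
  is_cover S [set: 'I_n] C -> step3_iter S st st' ->
  (#|st'.2| <= #|st.2| + #|C|)%N.
Proof.
move=> covC [Usmpl [OPT' [_ [_ minOPT'] -> _]]].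
apply: leq_trans (leq_card_setU _ _) _; rewrite leq_add2l.
exact/minOPT'/is_cover_restrict/subsetT.
Qed.

Lemma card_step3_run (C : {set 'I_m}) k st st' :
  is_cover S [set: 'I_n] C -> step3_run S k st st' ->
  (#|st'.2| <= #|st.2| + k * #|C|)%N.
Proof.
move=> covC; elim: k st' => [|k IHk] st' /=; first by move=> ->; rewrite addn0.
case=> mid [/IHk card_mid /(card_step3_iter covC) card_st'].
by rewrite mulSnr addnA; apply: leq_trans card_st' _; rewrite leq_add2r.
Qed.

End SamplingRounds.

Theorem lemma3p7 (R : realFieldType) (n m : nat) (S : 'I_m -> {set 'I_n})
  (alpha : nat) (eps optt : R) (opt : nat) (SOL : {set 'I_m}) :
  (0 < n)%N -> (1 <= alpha)%N -> 0 < eps ->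
  optimal_value S [set: 'I_n] opt ->
  (opt%:R <= optt) -> (optt <= (1 + eps) * opt%:R) ->
  alg1_output S alpha eps optt SOL ->
  (#|SOL|)%:R <= (alpha%:R + eps) * optt.
Proof.
move=> n_gt0 _ eps_gt0 [C [[covC _] <-]] opt_le _ [Ufin run].
have opt_gt0 : (0 < #|C|)%N.
  by apply: cover_card_gt0 covC; apply/set0Pn; exists (Ordinal n_gt0).
have optt_gt0 : 0 < optt by apply: lt_le_trans opt_le; rewrite ltr0n.
have pass := card_step2_le S n_gt0 (mulr_gt0 eps_gt0 optt_gt0).
have rounds : #|SOL|%:R
    <= #|(step2 S (n%:R / (eps * optt))).2|%:R + alpha%:R * #|C|%:R :> R.
  by rewrite -natrM -natrD ler_nat; exact: (card_step3_run covC run).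
have : alpha%:R * #|C|%:R <= alpha%:R * optt :> R by rewrite ler_wpM2l.
lra.
Qed.
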